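(* Let $\lambda^1,\dots,\lambda^M$ be loss functions such that each $\lambda^m$ is proper and $\eta^m$-mixable for some $\eta^m>0$. Consider the multiobjective game with $N$ experts: $L_0^{(m)}:=0$, $L_0^{n,m}:=0$; at each step $t=1,2,\dots$, each Expert $n$ announces $\gamma_t^n\in[0,1]$, Learner announces $\pi_t\in[0,1]$, Reality announces $\omega_t\in\{0,1\}$, and $L_t^{(m)}:=L_{t-1}^{(m)}+\lambda^m(\pi_t,\omega_t)$, $L_t^{n,m}:=L_{t-1}^{n,m}+\lambda^m(\gamma_t^n,\omega_t)$ for all $n,m$. If Learner follows the defensive forecasting algorithm (described in the context), then for all $t$, all $n=1,\dots,N$ and all $m=1,\dots,M$, $$L_t^{(m)}\le L_t^{n,m}+\frac{\ln(MN)}{\eta^m}.$$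
   Context: A loss function is a map $\lambda:[0,1]\times\{0,1\}\to[0,\infty]$ satisfying: (1) $\lambda(\gamma,0)$, $\lambda(\gamma,1)$ continuous in $\gamma\in[0,1]$ (standard topology on $[0,\infty]$); (2) some $\gamma$ has both values finite; (3) no $\gamma$ has both values infinite. Superprediction set: $\Sigma_\lambda=\{(x,y)\in[0,\infty)^2:\exists\gamma\ \lambda(\gamma,0)\le x,\ \lambda(\gamma,1)\le y\}$. $\lambda$ is $\eta$-mixable ($\eta>0$) if $\{(e^{-\eta x},e^{-\eta y}):(x,y)\in\Sigma_\lambda\}$ is convex; proper if $\pi\lambda(\pi,1)+(1-\pi)\lambda(\pi,0)\le\pi\lambda(\pi',1)+(1-\pi)\lambda(\pi',0)$ for all $\pi,\pi'\in[0,1]$. Defensive forecasting algorithm (in this setting): for each pair $(n,m)$ define, after step $t$, $Q^{n,m}_t:=\prod_{s=1}^t\exp\bigl(\eta^m(\lambda^m(\pi_s,\omega_s)-\lambda^m(\gamma_s^n,\omega_s))\bigr)$ (with $Q^{n,m}_0=1$), and $Q_t:=\frac{1}{MN}\sum_{n,m}Q^{n,m}_t$. At step $t$, after reading $\gamma_t^1,\dots,\gamma_t^N$, let $f_t(\pi,\omega)$ be the value $Q_t$ would take if $\pi_t=\pi$ and $\omega_t=\omega$, minus $Q_{t-1}$ (with $\infty-\infty:=0$). If $f_t(0,1)\le0$ predict $\pi_t:=0$; else if $f_t(1,0)\le0$ predict $\pi_t:=1$; otherwise predict any $\pi_t=\pi$ satisfying $f_t(\pi,0)=f_t(\pi,1)$.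 *)

From HB Require Import structures.
From mathcomp Require Import all_boot all_order all_algebra.
From mathcomp Require Import all_classical all_reals all_analysis.
Set Implicit Arguments. Unset Strict Implicit. Unset Printing Implicit Defensive.
Import Order.TTheory GRing.Theory Num.Theory.
Local Open Scope classical_set_scope.
Local Open Scope ring_scope.

(* Outcomes omega in {0,1} are encoded as bool: false = 0, true = 1.
   A loss function is lam : R -> bool -> \bar R; only its values on [0,1]
   matter. *)

Section Defs.
Variable R : realType.

Definition is_loss (lam : R -> bool -> \bar R) : Prop :=
  (forall g w, 0 <= g <= 1 -> (0 <= lam g w)%E) /\
  (forall w, {within `[0, 1], continuous (fun g => lam g w)}) /\
  (exists g, 0 <= g <= 1 /\ (lam g false < +oo)%E /\ (lam g true < +oo)%E) /\
  (forall g, 0 <= g <= 1 -> ~ (lam g false = +oo /\ lam g true = +oo)%E).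

Definition superpred (lam : R -> bool -> \bar R) : set (R * R) :=
  [set p | 0 <= p.1 /\ 0 <= p.2 /\
     exists g, 0 <= g <= 1 /\ (lam g false <= p.1%:E)%E /\
               (lam g true <= p.2%:E)%E].

Definition convex2 (S : set (R * R)) : Prop :=
  forall a b, S a -> S b -> forall t, 0 <= t <= 1 ->
    S (t * a.1 + (1 - t) * b.1, t * a.2 + (1 - t) * b.2).

Definition mixable_loss (eta : R) (lam : R -> bool -> \bar R) : Prop :=
  convex2 [set q | exists p, superpred lam p /\
                     q = (expR (- (eta * p.1)), expR (- (eta * p.2)))].

(* Properness, with the usual convention 0 * +oo = 0 of \bar R. *)
Definition proper_loss (lam : R -> bool -> \bar R) : Prop :=
  forall p p', 0 <= p <= 1 -> 0 <= p' <= 1 ->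
    (p%:E * lam p true + (1 - p)%:E * lam p false <=
     p%:E * lam p' true + (1 - p)%:E * lam p' false)%E.

Definition subE0 (x y : \bar R) : \bar R :=
  if (x == +oo%E) && (y == +oo%E) then 0%E else (x - y)%E.

Variables (N M : nat) (lam : 'I_M -> R -> bool -> \bar R) (eta : 'I_M -> R)
          (gam : nat -> 'I_N -> R).

Fixpoint Qnm (pi : nat -> R) (om : nat -> bool) (n : 'I_N) (m : 'I_M) (t : nat)
  : \bar R :=
  match t with
  | 0 => 1%E
  | t'.+1 => (Qnm pi om n m t' *
              expeR ((eta m)%:E *
                     subE0 (lam m (pi t) (om t)) (lam m (gam t n) (om t))))%E
  end.

Definition Qtot (pi : nat -> R) (om : nat -> bool) (t : nat) : \bar R :=
  (((M * N)%:R)^-1%:E * \sum_(n < N) \sum_(m < M) Qnm pi om n m t)%E.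

(* f_t(p, w): the value Q_t would take if pi_t = p and om_t = w, minus Q_{t-1}. *)
Definition fdef (pi : nat -> R) (om : nat -> bool) (t : nat) (p : R) (w : bool)
  : \bar R :=
  subE0 (Qtot (fun s => if s == t then p else pi s)
              (fun s => if s == t then w else om s) t)
        (Qtot pi om t.-1).

Definition follows_DF (pi : nat -> R) (om : nat -> bool) (t : nat) : Prop :=
  0 <= pi t <= 1 /\
  (if (fdef pi om t 0 true <= 0)%E then pi t = 0
   else if (fdef pi om t 1 false <= 0)%E then pi t = 1
   else fdef pi om t (pi t) false = fdef pi om t (pi t) true).

Definition Llearner (pi : nat -> R) (om : nat -> bool) (m : 'I_M) (t : nat)
  : \bar R := (\sum_(1 <= s < t.+1) lam m (pi s) (om s))%E.

Definition Lexpert (om : nat -> bool) (n : 'I_N) (m : 'I_M) (t : nat)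
  : \bar R := (\sum_(1 <= s < t.+1) lam m (gam s n) (om s))%E.

End Defs.

From HB Require Import structures.
From mathcomp Require Import all_boot all_order all_algebra.
From mathcomp Require Import all_classical all_reals all_analysis.
From mathcomp Require Import ring lra.
Import Order.TTheory GRing.Theory Num.Theory.
Local Open Scope ring_scope.

(* Properness and eta-mixability of a loss give, for every forecast p and every
   prediction g,
     p e^(eta (lam(p,1) - lam(g,1))) + (1 - p) e^(eta (lam(p,0) - lam(g,0))) <= 1:
   mixing (in exponential coordinates) a small amount of any superprediction
   into (lam(p,0), lam(p,1)) yields a superprediction that properness at p
   forbids from being better in p-expectation, and the first-order term of
   that comparison is exactly the left-hand side above minus 1.  Summing over
   experts and losses, the p-average of the two possible next values of Q is
   at most its current value; the defensive forecast is chosen so that Q does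
   not grow whatever Reality plays.  Hence Q_t <= 1, and since
   Q^{n,m}_t = e^(eta^m (L^(m)_t - L^{n,m}_t)) is at most M N Q_t, the bound
   follows by taking logarithms. *)

Section RealBounds.
Context {R : realType}.
Implicit Types a b p z : R.

Lemma ln1D_ge z : -1/2 <= z -> z - 2 * z ^+ 2 <= ln (1 + z).
Proof.
move=> hz; have z1 : 0 < 1 + z by lra.
have := expR_ge1Dx (- ln (1 + z)); rewrite expRN lnK ?posrE // => hinv.
suff : z - 2 * z ^+ 2 <= 1 - (1 + z)^-1 by lra.
rewrite -(ler_pM2r z1) [in leRHS]mulrBl mul1r mulVf ?gt_eqF //.
have : 0 <= z ^+ 2 * (1 + 2 * z) by apply: mulr_ge0; [exact: sqr_ge0|lra].
nra.
Qed.

(* The map t |-> p ln (1 + t b) + (1 - p) ln (1 + t a) vanishes at 0 with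
   slope (1 - p) a + p b there; the second-order bound [ln1D_ge] quantifies
   how small t must be for it to be positive. *)
Lemma exists_ln_mix_gt0 {p a b} : 0 <= p <= 1 -> -1 < a -> -1 < b ->
  0 < (1 - p) * a + p * b ->
  exists2 t, 0 <= t <= 1 & 0 < p * ln (1 + t * b) + (1 - p) * ln (1 + t * a).
Proof.
move=> /andP[p0 p1] a1 b1 D0; set D := (1 - p) * a + p * b in D0.
set K := 1 + a ^+ 2 + b ^+ 2.
have K0 : 0 < K by rewrite /K; have := sqr_ge0 a; have := sqr_ge0 b; lra.
have DK : D <= K / 2.
  have := sqr_ge0 (a - 1); have := sqr_ge0 (b - 1); rewrite !sqrrB1 /D /K; nra.
set t := D / (4 * K).
have tK : t * (4 * K) = D by rewrite /t mulfVK // mulf_neq0 // gt_eqF.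
have t0 : 0 < t by rewrite /t divr_gt0 // mulr_gt0.
have t18 : t <= 1/8 by nra.
exists t; first by apply/andP; split; lra.
have la : t * a - 2 * (t * a) ^+ 2 <= ln (1 + t * a) by apply: ln1D_ge; nra.
have lb : t * b - 2 * (t * b) ^+ 2 <= ln (1 + t * b) by apply: ln1D_ge; nra.
have quad : p * b ^+ 2 + (1 - p) * a ^+ 2 <= K.
  rewrite /K; have := sqr_ge0 a; have := sqr_ge0 b; nra.
have : 2 * t ^+ 2 * (p * b ^+ 2 + (1 - p) * a ^+ 2) <= t * D / 2.
  have := sqr_ge0 t; rewrite -tK; nra.
have : 0 < t * D by exact: mulr_gt0.
have q0 : 0 <= 1 - p by lra.
have := ler_wpM2l p0 lb; have := ler_wpM2l q0 la.
rewrite /D; nra.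
Qed.

Lemma mul_expR_le1E (eta q c x : R) : 0 < eta -> 0 < q ->
  (q * expR (eta * (c - x)) <= 1) = (c + ln q / eta <= x).
Proof.
move=> eta0 q0.
have -> : (q * expR (eta * (c - x)) <= 1) = (eta * (c - x) <= - ln q).
  by rewrite -(ler_pdivlMl _ _ q0) mulr1 -[q^-1]lnK ?posrE ?invr_gt0 // lnV ?posrE // ler_expR.
rewrite -ler_pdivlMl // -lerBrDl; apply/idP/idP; nra.
Qed.

Lemma ln_expR_mix {eta t u x x' : R} :
  expR (- (eta * x')) = t * expR (- (eta * x)) + (1 - t) * expR (- (eta * u)) ->
  ln (1 + t * (expR (eta * (u - x)) - 1)) = eta * (u - x').
Proof.
move=> ex'; rewrite -[RHS]expRK; congr ln.
have eux : expR (eta * (u - x)) = expR (eta * u) * expR (- (eta * x)).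
  by rewrite -expRD; congr expR; ring.
have eux' : expR (eta * (u - x')) = expR (eta * u) * expR (- (eta * x')).
  by rewrite -expRD; congr expR; ring.
have e1 : expR (eta * u) * expR (- (eta * u)) = 1 by rewrite -expRD subrr expR0.
rewrite eux eux' ex' [in RHS]mulrDr (mulrCA (expR (eta * u)) (1 - t)) e1; ring.
Qed.

End RealBounds.

Lemma within01_lt_interior {R : realType} {f : R -> \bar R} {g : R} {th : \bar R} :
  {within `[0, 1], continuous f}%classic -> 0 <= g <= 1 -> (f g < th)%E ->
  exists2 g1, 0 < g1 < 1 & (f g1 < th)%E.
Proof.
move=> cf g01 fgth.
have gin : g \in `[0, 1]%classic by apply: mem_set; rewrite /= in_itv.
move: cf; rewrite continuous_subspace_in => /(_ g gin) cf.
have : nbhs (f g) [set y | (y < th)%E]%classic.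
  by apply: open_nbhs_nbhs; split; [exact: open_ereal_lt_ereal|].
move=> /cf H.
have {H} : nbhs (g : subspace `[0, 1]%classic) (fun x => (f x < th)%E) by exact: H.
move/nbhs_subspace_ex => /(_ (set_mem gin)) [V /nbhs_ballP [e /= e0 HV] HUV].
have He : forall y : R, `|g - y| < e -> `[0, 1]%classic y -> (f y < th)%E.
  move=> y gy Ay.
  have : (V `&` `[0, 1]%classic)%classic y by split => //; apply: HV; exact: gy.
  by rewrite -HUV => -[].
pose d := Num.min e 1.
have d0 : 0 < d by rewrite lt_min e0 ltr01.
have de : d <= e by rewrite ge_min lexx.
have d1 : d <= 1 by rewrite ge_min lexx orbT.
case/andP: g01 => g0 g1.
(* moving g towards 1/2 by a fraction d lands in (0, 1) and stays within e of g *)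
have g'01 : 0 < (1 - d) * g + d / 2 < 1 by apply/andP; split; nra.
exists ((1 - d) * g + d / 2) => //; apply: He.
- rewrite /ball /= -normrN.
  have -> : - (g - ((1 - d) * g + d / 2)) = d * (1/2 - g) by ring.
  rewrite normrM ger0_norm; last by lra.
  have : `|1/2 - g| <= 1/2 by rewrite ler_norml; apply/andP; split; lra.
  nra.
- by case/andP: g'01 => *; rewrite /= in_itv /=; apply/andP; split; apply: ltW.
Qed.

Section ProperMixableLoss.
Context {R : realType}.
Variable l : R -> bool -> \bar R.
Hypotheses (hl : is_loss l) (pr : proper_loss l).

Lemma proper_loss_fin p w : 0 <= p <= 1 -> (if w then 0 < p else p < 1) ->
  l p w \is a fin_num.
Proof.
move: hl => [l0 [_ [[g [g01 [gf gt]]] _]]] p01 hw.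
have [p0 q0] : (0 <= p%:E)%E /\ (0 <= (1 - p)%:E)%E.
  by case/andP: p01 => ? ?; rewrite !lee_fin subr_ge0.
have : (p%:E * l p true + (1 - p)%:E * l p false < +oo)%E.
  apply: le_lt_trans (pr p g p01 g01) _.
  by apply: lte_add_pinfty; apply: lte_mul_pinfty.
have neNy x : (0 <= x)%E -> x != -oo%E by case: x.
rewrite ge0_fin_numE ?l0 // ltey; case: w hw => hw; apply: contraTneq => ->.
- by rewrite gt0_muley ?lte_fin // addye ?ltxx // neNy // mule_ge0 ?l0.
- rewrite (gt0_muley (x := (1 - p)%:E)) ?lte_fin ?subr_gt0 //.
  by rewrite addey ?ltxx // neNy // mule_ge0 ?l0.
Qed.

(* Where a coordinate of the loss curve is infinite, the bound is transferred
   from a nearby interior point, whose losses are finite. *)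
Lemma superpred_lb_loss (b : R) (w : bool) :
  (forall x y, superpred l (x, y) -> b <= (if w then y else x)) ->
  forall g, 0 <= g <= 1 -> (b%:E <= l g w)%E.
Proof.
move=> hb g g01; rewrite leNgt; apply/negP => lt_gb.
have [g1 /andP[g10 g11] lt_g1b] := within01_lt_interior (hl.2.1 w) g01 lt_gb.
have g101 : 0 <= g1 <= 1 by apply/andP; split; apply: ltW.
have ff := @proper_loss_fin g1 false g101 g11.
have ft := @proper_loss_fin g1 true g101 g10.
have hs : superpred l (fine (l g1 false), fine (l g1 true)).
  split; first by rewrite -lee_fin fineK //; exact: hl.1.
  split; first by rewrite -lee_fin fineK //; exact: hl.1.
  by exists g1; split => //=; rewrite !fineK.
move: (hb _ _ hs) lt_g1b; case: w {hb lt_gb} => /=.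
  by rewrite -(fineK ft) lte_fin => ? ?; lra.
by rewrite -(fineK ff) lte_fin => ? ?; lra.
Qed.

Variable eta : R.
Hypotheses (eta0 : 0 < eta) (mix : mixable_loss eta l).

(* Mix, in exponential coordinates, the superprediction (x, y) into (u, v) with
   weight t; properness at p against the resulting superprediction gives the bound. *)
Lemma proper_mixable_ln_le0 {p u v x y t : R} :
  0 <= p <= 1 -> l p false = u%:E -> l p true = v%:E -> superpred l (x, y) ->
  0 <= t <= 1 ->
  p * ln (1 + t * (expR (eta * (v - y)) - 1)) +
  (1 - p) * ln (1 + t * (expR (eta * (u - x)) - 1)) <= 0.
Proof.
move=> p01 hu hv sxy t01.
have u0 : 0 <= u by rewrite -lee_fin -hu; exact: hl.1.
have v0 : 0 <= v by rewrite -lee_fin -hv; exact: hl.1.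
have suv : superpred l (u, v).
  by split => //; split => //; exists p; rewrite hu hv.
have [[x' y'] [[/= _ [_ [g' [g'01 [hgf hgt]]]]] [ex ey]]] :=
  mix _ _ (ex_intro _ (x, y) (conj sxy erefl)) (ex_intro _ (u, v) (conj suv erefl)) t t01.
rewrite (ln_expR_mix (esym ex)) (ln_expR_mix (esym ey)).
have hpr : p * v + (1 - p) * u <= p * y' + (1 - p) * x'.
  have := pr p g' p01 g'01; rewrite hu hv => h.
  rewrite -lee_fin !EFinD !EFinM; apply: (le_trans h).
  by case/andP: p01 => p0 p1; apply: leeD; apply: lee_wpmul2l; rewrite // lee_fin subr_ge0.
have := ler_wpM2l (ltW eta0) hpr; nra.
Qed.

Lemma proper_mixable_exp_le1 {p u v x y : R} :
  0 <= p <= 1 -> l p false = u%:E -> l p true = v%:E -> superpred l (x, y) ->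
  (1 - p) * expR (eta * (u - x)) + p * expR (eta * (v - y)) <= 1.
Proof.
move=> p01 hu hv sxy; rewrite leNgt; apply/negP => gt1.
have a1 : -1 < expR (eta * (u - x)) - 1 by have := expR_gt0 (eta * (u - x)); lra.
have b1 : -1 < expR (eta * (v - y)) - 1 by have := expR_gt0 (eta * (v - y)); lra.
have D0 : 0 < (1 - p) * (expR (eta * (u - x)) - 1) + p * (expR (eta * (v - y)) - 1).
  by lra.
have [t t01] := exists_ln_mix_gt0 p01 a1 b1 D0.
by rewrite ltNge proper_mixable_ln_le0.
Qed.

Lemma expeR_subE0y (a : R) : expeR (eta%:E * subE0 a%:E +oo) = 0.
Proof. by rewrite /subE0 /= gt0_muleNy ?lte_fin. Qed.

Lemma expeR_subE0_le1 (a : R) (y : \bar R) :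
  (a%:E <= y)%E -> (expeR (eta%:E * subE0 a%:E y) <= 1)%E.
Proof.
case: y => [r| |] //= hay.
  by rewrite lee_fin expR_le1 pmulr_rle0 // subr_le0 -lee_fin.
by rewrite expeR_subE0y.
Qed.

Lemma proper_mixable_expeR_fin_le1 (p u v g : R) :
  0 < p < 1 -> l p false = u%:E -> l p true = v%:E -> 0 <= g <= 1 ->
  (p%:E * expeR (eta%:E * subE0 v%:E (l g true)) +
   (1 - p)%:E * expeR (eta%:E * subE0 u%:E (l g false)) <= 1)%E.
Proof.
move=> /andP[p0 p1] hu hv g01.
have p01 : 0 <= p <= 1 by apply/andP; split; apply: ltW.
have q0 : 0 < 1 - p by rewrite subr_gt0.
have lbF : ((u + ln (1 - p) / eta)%:E <= l g false)%E.
  apply: superpred_lb_loss => // x y sxy /=; rewrite -mul_expR_le1E //.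
  have := proper_mixable_exp_le1 p01 hu hv sxy; have := expR_ge0 (eta * (v - y)).
  nra.
have lbT : ((v + ln p / eta)%:E <= l g true)%E.
  apply: superpred_lb_loss => // x y sxy /=; rewrite -mul_expR_le1E //.
  have := proper_mixable_exp_le1 p01 hu hv sxy; have := expR_ge0 (eta * (u - x)).
  nra.
have nb := hl.2.2.2 g g01.
case Ef: (l g false) lbF nb => [r0| |] //; case Et: (l g true) lbT => [r1| |] //.
- move=> lb1 lb0 _; rewrite /= -!EFinM -EFinD lee_fin (addrC (p * _)).
  apply: proper_mixable_exp_le1 => //; split; first by rewrite -lee_fin -Ef; exact: hl.1.
  split; first by rewrite -lee_fin -Et; exact: hl.1.
  by exists g; rewrite Ef Et.
- by move=> _ lb0 _; rewrite expeR_subE0y mule0 add0e -EFinM lee_fin mul_expR_le1E // -lee_fin.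
- by move=> lb1 _ _; rewrite expeR_subE0y mule0 adde0 -EFinM lee_fin mul_expR_le1E // -lee_fin.
- by move=> _ _ [].
Qed.

Lemma proper_mixable_expeR_le1 (p g : R) : 0 <= p <= 1 -> 0 <= g <= 1 ->
  (p%:E * expeR (eta%:E * subE0 (l p true) (l g true)) +
   (1 - p)%:E * expeR (eta%:E * subE0 (l p false) (l g false)) <= 1)%E.
Proof.
move=> p01 g01; have hpr := pr p g p01 g01.
have [p0|p0] := eqVneq p 0.
  move: hpr; rewrite p0 !mul0e !add0e subr0 !mul1e.
  have /fineK <- : l 0 false \is a fin_num by apply: proper_loss_fin; rewrite ?lexx ?ler01.
  exact: expeR_subE0_le1.
have [p1|p1] := eqVneq p 1.
  move: hpr; rewrite p1 subrr !mul0e !adde0 !mul1e.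
  have /fineK <- : l 1 true \is a fin_num by apply: proper_loss_fin; rewrite ?lexx ?ler01.
  exact: expeR_subE0_le1.
have p01' : 0 < p < 1.
  by case/andP: p01 => pge0 ple1; rewrite !lt_neqAle pge0 ple1 eq_sym p0 p1.
have /fineK hu : l p false \is a fin_num by apply: proper_loss_fin => //; case/andP: p01'.
have /fineK hv : l p true \is a fin_num by apply: proper_loss_fin => //; case/andP: p01'.
by rewrite -hu -hv; apply: proper_mixable_expeR_fin_le1.
Qed.

End ProperMixableLoss.

Section ExtendedReals.
Context {R : realType}.

Lemma subE0_EFin (x : \bar R) (r : R) : subE0 x r%:E = (x - r%:E)%E.
Proof. by rewrite /subE0 andbF. Qed.

Lemma subE0_pmul_le0 (c s : R) (x : \bar R) : 0 < c ->
  (subE0 (c%:E * x) (c * s)%:E <= 0)%E = (x <= s%:E)%E.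
Proof. by move=> c0; rewrite subE0_EFin sube_le0 EFinM lee_pmul2l ?lte_fin. Qed.

Lemma subE0_pmul_inj (c s : R) (x y : \bar R) : 0 < c ->
  subE0 (c%:E * x) (c * s)%:E = subE0 (c%:E * y) (c * s)%:E -> x = y.
Proof.
move=> c0; rewrite !subE0_EFin => /(congr1 (fun z => z + (c * s)%:E)%E).
rewrite !subeK // => /(congr1 (fun z => (c^-1)%:E * z)%E).
by rewrite !muleA -EFinM mulVf ?gt_eqF // !mul1e.
Qed.

(* At an equalizing p both outcomes equal their own p-average; at the endpoints
   the average at q = 0 or q = 1 bounds the outcome the rule does not test. *)
Lemma defensive_choice_le (T : R -> bool -> \bar R) (s p : R) :
  (forall q, 0 <= q <= 1 -> (q%:E * T q true + (1 - q)%:E * T q false <= s%:E)%E) ->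
  0 <= p <= 1 ->
  (if (T 0%R true <= s%:E)%E then p = 0
   else if (T 1%R false <= s%:E)%E then p = 1 else T p false = T p true) ->
  forall w, (T p w <= s%:E)%E.
Proof.
move=> avg p01; case: ifP => [h0 -> [] //|_].
  by have := avg 0; rewrite mul0e add0e subr0 mul1e lexx ler01; apply.
case: ifP => [h1 -> [] //|_ eqT w].
  by have := avg 1; rewrite subrr mul0e adde0 mul1e lexx ler01; apply.
have [p0 p1] : 0 <= p /\ 0 <= 1 - p by case/andP: p01 => ? ?; split; lra.
have := avg p p01; rewrite -eqT -ge0_muleDl ?lee_fin // -EFinD subrKC mul1e.
by case: w; rewrite ?eqT.
Qed.

Lemma expeR_le_regret (e c y : R) (x : \bar R) : 0 < e -> 0 < c ->
  (expeR (e%:E * (x - y%:E)) <= c%:E)%E -> (x <= y%:E + (ln c / e)%:E)%E.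
Proof.
move=> e0 c0; case: x => [x| |] /=.
- rewrite -EFinD !lee_fin -ler_ln ?posrE ?expR_gt0 // expRK => h.
  by rewrite -lerBlDl ler_pdivlMr // mulrC.
- by rewrite addye // gt0_muley ?lte_fin.
- by rewrite leNye.
Qed.

End ExtendedReals.

Section DefensiveForecasting.
Context {R : realType} {N M : nat}.
Variables (lam : 'I_M -> R -> bool -> \bar R) (eta : 'I_M -> R) (gam : nat -> 'I_N -> R).

Lemma Qnm_ge0 pi om n m k : (0 <= Qnm lam eta gam pi om n m k)%E.
Proof.
elim: k => [|k IH] /=; first by rewrite lee_fin.
by apply: mule_ge0 => //; exact: expeR_ge0.
Qed.

Lemma eq_Qnm pi pi' om om' n m k :
  (forall s, (s <= k)%N -> pi s = pi' s /\ om s = om' s) ->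
  Qnm lam eta gam pi om n m k = Qnm lam eta gam pi' om' n m k.
Proof.
elim: k => [//|k IH] h /=.
rewrite IH; last by move=> s sk; apply: h; exact: leqW.
by have [-> ->] := h k.+1 (leqnn _).
Qed.

Definition Qsum pi om t : \bar R :=
  (\sum_(n < N) \sum_(m < M) Qnm lam eta gam pi om n m t)%E.

Lemma Qsum_ge0 pi om t : (0 <= Qsum pi om t)%E.
Proof. by apply: sume_ge0 => n _; apply: sume_ge0 => m _; exact: Qnm_ge0. Qed.

(* N * M * Q_{t+1}, as a function of Learner's and Reality's moves at t + 1 *)
Definition Qnext pi om t p w : \bar R :=
  (\sum_(n < N) \sum_(m < M) (Qnm lam eta gam pi om n m t *
     expeR ((eta m)%:E * subE0 (lam m p w) (lam m (gam t.+1 n) w))))%E.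

Lemma fdefE pi om t p w :
  fdef lam eta gam pi om t.+1 p w =
  subE0 (((M * N)%:R^-1)%:E * Qnext pi om t p w) (((M * N)%:R^-1)%:E * Qsum pi om t).
Proof.
rewrite /fdef /Qtot /=; congr (subE0 (_ * _) _).
apply: eq_bigr => n _; apply: eq_bigr => m _; rewrite eqxx; congr (_ * _)%E.
by apply: eq_Qnm => s hs; rewrite ltn_eqF.
Qed.

Hypotheses (Hloss : forall m, is_loss (lam m))
  (Hproper : forall m, proper_loss (lam m))
  (Heta : forall m, 0 < eta m)
  (Hmix : forall m, mixable_loss (eta m) (lam m))
  (Hgam : forall t n, (1 <= t)%N -> 0 <= gam t n <= 1).

Lemma Qnext_avg_le pi om t q : 0 <= q <= 1 ->
  (q%:E * Qnext pi om t q true + (1 - q)%:E * Qnext pi om t q false <= Qsum pi om t)%E.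
Proof.
move=> q01; case/andP: (q01) => q0 q1.
have ge0 (x : \bar R) y : (0 <= x)%E -> (0 <= x * expeR y)%E.
  by move=> x0; apply: mule_ge0 => //; exact: expeR_ge0.
rewrite !ge0_sume_distrr -?big_split /=; last 2 first.
- by move=> n _; apply: sume_ge0 => m _; apply/ge0/Qnm_ge0.
- by move=> n _; apply: sume_ge0 => m _; apply/ge0/Qnm_ge0.
apply: lee_sum => n _.
rewrite !ge0_sume_distrr -?big_split /=; last 2 first.
- by move=> m _; apply/ge0/Qnm_ge0.
- by move=> m _; apply/ge0/Qnm_ge0.
apply: lee_sum => m _.
rewrite !(muleCA _ (Qnm _ _ _ _ _ _ _ _)) -ge0_muleDr; last 2 first.
- by apply: mule_ge0; [rewrite lee_fin|exact: expeR_ge0].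
- by apply: mule_ge0; [rewrite lee_fin subr_ge0|exact: expeR_ge0].
rewrite -[leRHS]mule1; apply: lee_wpmul2l; first exact: Qnm_ge0.
by apply: proper_mixable_expeR_le1 => //; exact: Hgam.
Qed.

Lemma Qsum_succ_le pi om t : (0 < M * N)%N -> Qsum pi om t \is a fin_num ->
  follows_DF lam eta gam pi om t.+1 -> (Qsum pi om t.+1 <= Qsum pi om t)%E.
Proof.
move=> MN0 /fineK Es [p01 rule]; set s := fine (Qsum pi om t) in Es.
have c0 : 0 < (M * N)%:R^-1 :> R by rewrite invr_gt0 ltr0n.
rewrite -Es; apply: (defensive_choice_le (Qnext pi om t)) => //.
  by move=> q q01; rewrite Es; exact: Qnext_avg_le.
move: rule; rewrite !fdefE -Es -EFinM !subE0_pmul_le0 //.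
by case: ifP => // _; case: ifP => // _; exact: subE0_pmul_inj.
Qed.

Lemma Qnm_le_Qsum pi om n m t : (Qnm lam eta gam pi om n m t <= Qsum pi om t)%E.
Proof.
have ge0 := Qnm_ge0 pi om.
rewrite /Qsum (bigD1 n) //= (bigD1 m) //= -addeA; apply: leeDl; apply: adde_ge0.
- by apply: sume_ge0 => *.
- by apply: sume_ge0 => *; apply: sume_ge0 => *.
Qed.

Lemma Qsum_le pi om : (0 < M * N)%N ->
  (forall t, (1 <= t)%N -> follows_DF lam eta gam pi om t) ->
  forall t, (Qsum pi om t <= (M * N)%:R%:E)%E.
Proof.
move=> MN0 DF; elim=> [|t IH].
  rewrite /Qsum /=; under eq_bigr do rewrite sumEFin sumr_const card_ord.
  by rewrite sumEFin sumr_const card_ord natrM mulr_natr.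
have fin : Qsum pi om t \is a fin_num.
  by move: IH (Qsum_ge0 pi om t); case: (Qsum pi om t).
by apply: (le_trans _ IH); apply: Qsum_succ_le => //; exact: DF.
Qed.

Lemma Qnm_regretE pi om n m k :
  (forall s, (1 <= s)%N -> (0 <= lam m (pi s) (om s))%E) ->
  Lexpert lam gam om n m k \is a fin_num ->
  Qnm lam eta gam pi om n m k =
  expeR ((eta m)%:E * (Llearner lam pi om m k - Lexpert lam gam om n m k)).
Proof.
move=> lam0; elim: k => [|k IH].
  by rewrite /Llearner /Lexpert !big_geq //= subr0 mulr0 expR0.
have -> : Lexpert lam gam om n m k.+1 =
    (Lexpert lam gam om n m k + lam m (gam k.+1 n) (om k.+1))%E.
  by rewrite /Lexpert big_nat_recr.
have -> : Llearner lam pi om m k.+1 =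
    (Llearner lam pi om m k + lam m (pi k.+1) (om k.+1))%E.
  by rewrite /Llearner big_nat_recr.
rewrite fin_numD => /andP[fe /fineK fb] /=; rewrite IH // -fb subE0_EFin.
have Ll0 : (0 <= Llearner lam pi om m k)%E.
  by rewrite /Llearner big_nat_cond; apply: sume_ge0 => s /andP[/andP[s1 _] _]; exact: lam0.
have gtNy (x y : \bar R) : (0 <= x)%E -> y \is a fin_num -> (-oo < x - y)%E.
  by move=> + /fineK <-; case: x => [x| |] // _; rewrite ltNyr.
rewrite -expeRD -muleDr //; last by rewrite ltninfty_adde_def // inE gtNy // lam0.
by rewrite oppeD ?fin_num_adde_defl // addeACA.
Qed.

End DefensiveForecasting.

Theorem corollary3 (R : realType) (N M : nat)
  (lam : 'I_M -> R -> bool -> \bar R) (eta : 'I_M -> R)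
  (Hloss : forall m, is_loss (lam m))
  (Hproper : forall m, proper_loss (lam m))
  (Heta : forall m, 0 < eta m)
  (Hmix : forall m, mixable_loss (eta m) (lam m))
  (gam : nat -> 'I_N -> R) (pi : nat -> R) (om : nat -> bool)
  (Hgam : forall t n, (1 <= t)%N -> 0 <= gam t n <= 1)
  (Hlearner : forall t, (1 <= t)%N -> follows_DF lam eta gam pi om t) :
  forall t (n : 'I_N) (m : 'I_M),
    (Llearner lam pi om m t <=
     Lexpert lam gam om n m t + (ln (M * N)%:R / eta m)%:E)%E.
Proof.
move=> t n m.
have MN0 : (0 < M * N)%N.
  by rewrite muln_gt0 (leq_ltn_trans _ (ltn_ord m)) ?(leq_ltn_trans _ (ltn_ord n)).
have lam0 s : (1 <= s)%N -> (0 <= lam m (pi s) (om s))%E.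
  by move=> s1; apply: (Hloss m).1; case: (Hlearner s s1).
have Le0 : (0 <= Lexpert lam gam om n m t)%E.
  rewrite /Lexpert big_nat_cond; apply: sume_ge0 => s /andP[/andP[s1 _] _].
  by apply: (Hloss m).1; exact: Hgam.
have [fin|] := boolP (Lexpert lam gam om n m t \is a fin_num); last first.
  by move: Le0; case: (Lexpert lam gam om n m t) => // _ _; rewrite addye ?leey.
have : (Qnm lam eta gam pi om n m t <= (M * N)%:R%:E)%E.
  by apply: (le_trans (Qnm_le_Qsum lam eta gam pi om n m t)); exact: Qsum_le.
rewrite Qnm_regretE // -(fineK fin).
by apply: expeR_le_regret; rewrite ?ltr0n.
Qed.
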